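(* There are absolute constants $c, c' > 0$ such that for all $d \geq 2$, $n \geq 1$ and $s \geq 1$ the following holds: if there is an $LK_d(MOD_p)$-refutation of size $s$ of the set $\neg PHP_n$, then Prover has a winning strategy for the game $G(d + c, n, c' \log s)$. (In the paper's notation: Prover has a winning strategy for $G(d+O(1), n, O(\log s))$.)
   Context: Fix a prime $p$. Formulas are built from propositional variables using the connectives $\neg$, unbounded-arity $\bigvee$, and unbounded-arity connectives $MOD_{p,i}$, $i=0,\dots,p-1$, where $MOD_{p,i}(y_1,\dots,y_k)$ means $\sum_j y_j \equiv i \pmod p$ (there is no $\bigwedge$; conjunctions are expressed via $\neg,\bigvee$). The depth of a formula is the maximal number of alternations of connectives along a path; the size of a formula or proof is its total number of symbols. $LK(MOD_p)$ is the sequent calculus with initial sequents $\varphi \to \varphi$, the structural rules (weakening, contraction, exchange), cut, left and right $\neg$-introduction, the rule $\bigvee$:left (from $\varphi_i,\Gamma\to\Delta$ for all $i\le t$ infer $\bigvee_{i\le t}\varphi_i,\Gamma\to\Delta$), the rule $\bigvee$:right (from $\Gamma\to\Delta,\varphi_j$ infer $\Gamma\to\Delta,\bigvee_{i\le t}\varphi_i$, any $j\le t$), and the $MOD_p$-axioms: $MOD_{p,0}(\emptyset)$; $\neg MOD_{p,i}(\emptyset)$ for $i=1,\dots,p-1$; and $MOD_{p,i}(\Gamma,\phi)\equiv[(MOD_{p,i}(\Gamma)\wedge\neg\phi)\vee(MOD_{p,i-1}(\Gamma)\wedge\phi)]$ for $i=0,\dots,p-1$ ($i-1$ taken mod $p$,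 $\Gamma$ a possibly empty sequence of formulas). $LK_d(MOD_p)$ is the subsystem in which all formulas have depth at most $d$. A refutation of a set of formulas $\Sigma$ is a derivation of the empty sequent in which the sequents $\to \psi$, $\psi\in\Sigma$, may be used as additional initial sequents. $\neg PHP_n$ is the set of formulas in variables $p_{ij}$, $i\in[n+1]$, $j\in[n]$: $\bigvee_{j\in[n]}p_{ij}$ for each $i\in[n+1]$; $\neg p_{i_1 j}\vee\neg p_{i_2 j}$ for all $i_1\neq i_2\in[n+1]$, $j\in[n]$; $\neg p_{ij_1}\vee\neg p_{ij_2}$ for all $i\in[n+1]$, $j_1\ne j_2\in[n]$. The game $G(d,n,t)$ is played by Prover and Liar for $t$ rounds. In each round Prover asks one question: (P1) the truth value of a formula $\varphi$; or (P2) if Liar already gave a truth value to $\varphi=\bigvee_{i\le u}\varphi_i$: (a) if he said false, Prover may ask the truth value of some one $\varphi_j$, $j\le u$; (b) if he said true, Prover may request a witness, i.e. a $j\le u$ with $\varphi_j$ stated true. All formulas asked are in the variables of $\neg PHP_n$, of depth at most $d$ and size at most $2^t$. Liar must obey: (L0) a formula asked again gets the same answer; (L1) $\varphi$ and $\neg\varphi$ get opposite values; (L2) in (P2a) he must answer false, in (P2b) he must give value true to some $\varphi_j$, $j\le u$; (L3) every $MOD_p$-axiom asked gets true; (L4) every formula of $\neg PHP_n$ asked gets true. Liar wins a play if he can answer all $t$ questions obeying the rules; otherwise Prover wins. A winning strategy for Prover is one winning against every Liar. *)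

From Stdlib Require List.
From mathcomp Require Import ssreflect ssrfun ssrbool eqtype ssrnat seq div prime.

Set Implicit Arguments.
Unset Strict Implicit.
Unset Printing Implicit Defensive.

(* Formulas over variables p_(i,j) with connectives ¬, unbounded ⋁,    *)
(* and MOD_{p,i}. The modulus p is a parameter of the logic; the index *)
(* i of Mod i must satisfy i < p (predicate [wf p]).                   *)
(* Var i j stands for p_{(i+1),(j+1)} (0-based indices).               *)
Inductive form : Type :=
| Var of nat & nat
| Neg of form
| Or of list form
| Mod of nat & list form.

Fixpoint wf (p : nat) (f : form) : Prop :=
  match f with
  | Var _ _ => True
  | Neg g => wf p g
  | Or fs => (fix wfl (l : list form) : Prop :=
                match l with nil => True | g :: gs => wf p g /\ wfl gs end) fs
  | Mod i fs => i < p /\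
      (fix wfl (l : list form) : Prop :=
         match l with nil => True | g :: gs => wf p g /\ wfl gs end) fs
  end.

Fixpoint php_vars (n : nat) (f : form) : Prop :=
  match f with
  | Var i j => i < n.+1 /\ j < n
  | Neg g => php_vars n g
  | Or fs => (fix vl (l : list form) : Prop :=
                match l with nil => True | g :: gs => php_vars n g /\ vl gs end) fs
  | Mod _ fs => (fix vl (l : list form) : Prop :=
                match l with nil => True | g :: gs => php_vars n g /\ vl gs end) fs
  end.

Fixpoint fsize (f : form) : nat :=
  match f with
  | Var _ _ => 1
  | Neg g => (fsize g).+1
  | Or fs => (sumn (map fsize fs)).+1
  | Mod _ fs => (sumn (map fsize fs)).+1
  end.

Definition kind (f : form) : nat :=
  match f with Var _ _ => 0 | Neg _ => 1 | Or _ => 2 | Mod i _ => i.+3 end.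

(* depth = maximal number of alternations of connectives along a path:
   a maximal block of identical connectives along a path counts once;
   variables have depth 0. *)
Fixpoint depth (f : form) : nat :=
  match f with
  | Var _ _ => 0
  | Neg g => if kind g == 1 then depth g else (depth g).+1
  | Or fs => (fix dl (l : list form) : nat :=
                match l with
                | nil => 1
                | g :: gs => maxn (if kind g == 2 then depth g else (depth g).+1) (dl gs)
                end) fs
  | Mod i fs => (fix dl (l : list form) : nat :=
                match l with
                | nil => 1
                | g :: gs => maxn (if kind g == i.+3 then depth g else (depth g).+1) (dl gs)
                end) fs
  end.

Definition And (a b : form) : form := Neg (Or [:: Neg a; Neg b]).
Definition Equiv (a b : form) : form := And (Or [:: Neg a; b]) (Or [:: Neg b; a]).

Definition mod_axiom (p : nat) (psi : form) : Prop :=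
  psi = Mod 0 [::]
  \/ (exists i, 1 <= i < p /\ psi = Neg (Mod i [::]))
  \/ (exists i (G : list form) (phi : form), i < p /\
        psi = Equiv (Mod i (G ++ [:: phi]))
                    (Or [:: And (Mod i G) (Neg phi);
                            And (Mod ((i + (p - 1)) %% p) G) phi])).

Definition negPHP (n : nat) (psi : form) : Prop :=
  (exists i, i < n.+1 /\ psi = Or (map (fun j => Var i j) (iota 0 n)))
  \/ (exists i1 i2 j, i1 < n.+1 /\ i2 < n.+1 /\ i1 <> i2 /\ j < n /\
        psi = Or [:: Neg (Var i1 j); Neg (Var i2 j)])
  \/ (exists i j1 j2, i < n.+1 /\ j1 < n /\ j2 < n /\ j1 <> j2 /\
        psi = Or [:: Neg (Var i j1); Neg (Var i j2)]).

(* sequents; proofs are sequences (DAG-like).                          *)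
Definition sequent := (list form * list form)%type.

Inductive rule_inst (p n : nat) (prev : list sequent) : sequent -> Prop :=
| R_init phi : rule_inst p n prev ([:: phi], [:: phi])
| R_hyp psi : negPHP n psi -> rule_inst p n prev ([::], [:: psi])
| R_modax psi : mod_axiom p psi -> rule_inst p n prev ([::], [:: psi])
| R_weakl phi G D : List.In (G, D) prev -> rule_inst p n prev (phi :: G, D)
| R_weakr phi G D : List.In (G, D) prev -> rule_inst p n prev (G, D ++ [:: phi])
| R_contrl phi G D : List.In (phi :: phi :: G, D) prev -> rule_inst p n prev (phi :: G, D)
| R_contrr phi G D : List.In (G, D ++ [:: phi; phi]) prev ->
    rule_inst p n prev (G, D ++ [:: phi])
| R_exchl G1 G2 phi psi D : List.In (G1 ++ phi :: psi :: G2, D) prev ->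
    rule_inst p n prev (G1 ++ psi :: phi :: G2, D)
| R_exchr G D1 D2 phi psi : List.In (G, D1 ++ phi :: psi :: D2) prev ->
    rule_inst p n prev (G, D1 ++ psi :: phi :: D2)
| R_cut phi G D : List.In (G, D ++ [:: phi]) prev -> List.In (phi :: G, D) prev ->
    rule_inst p n prev (G, D)
| R_negl phi G D : List.In (G, D ++ [:: phi]) prev -> rule_inst p n prev (Neg phi :: G, D)
| R_negr phi G D : List.In (phi :: G, D) prev -> rule_inst p n prev (G, D ++ [:: Neg phi])
| R_orl fs G D : (forall phi, List.In phi fs -> List.In (phi :: G, D) prev) ->
    rule_inst p n prev (Or fs :: G, D)
| R_orr fs phi G D : List.In phi fs -> List.In (G, D ++ [:: phi]) prev ->
    rule_inst p n prev (G, D ++ [:: Or fs]).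

Definition is_refutation (p n d : nat) (P : list sequent) : Prop :=
  (forall k, k < size P -> rule_inst p n (take k P) (nth ([::], [::]) P k))
  /\ (exists P', P = P' ++ [:: ([::], [::])])
  /\ (forall S phi, List.In S P -> List.In phi (S.1 ++ S.2) -> wf p phi /\ depth phi <= d).

(* size of a proof: total number of symbols (formulas plus one arrow per sequent) *)
Definition seq_size (S : sequent) : nat :=
  (sumn (map fsize S.1) + sumn (map fsize S.2)).+1.
Definition proof_size (P : list sequent) : nat := sumn (map seq_size P).

Inductive question : Type :=
| AskVal of form            (* (P1) truth value of phi *)
| AskComp of form & nat     (* (P2a) phi = ⋁ fs said false: value of the j-th disjunct *)
| AskWit of form.           (* (P2b) phi = ⋁ fs said true: request a witness *)

Inductive answer : Type :=
| ABool of bool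
| AIdx of nat.

Definition history := list (question * answer).

Definition stated (qa : question * answer) : list (form * bool) :=
  match qa with
  | (AskVal phi, ABool b) => [:: (phi, b)]
  | (AskComp (Or fs) j, ABool b) => [:: (nth (Var 0 0) fs j, b)]
  | (AskWit (Or fs), AIdx j) => [:: (nth (Var 0 0) fs j, true)]
  | _ => [::]
  end.

Definition record (h : history) : list (form * bool) := flatten (map stated h).

Definition game_form (p d n t : nat) (phi : form) : Prop :=
  wf p phi /\ php_vars n phi /\ depth phi <= d /\ fsize phi <= 2 ^ t.

Definition legal_q (p d n t : nat) (R : list (form * bool)) (q : question) : Prop :=
  match q with
  | AskVal phi => game_form p d n t phi
  | AskComp phi j => List.In (phi, false) R /\ exists fs, phi = Or fs /\ j < size fs
  | AskWit phi => List.In (phi, true) R /\ exists fs, phi = Or fs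
  end.

(* rules (L0), (L1), (L3), (L4) on the set of all stated values *)
Definition consistent (p n : nat) (R : list (form * bool)) : Prop :=
  (forall phi b b', List.In (phi, b) R -> List.In (phi, b') R -> b = b')
  /\ (forall phi b b', List.In (phi, b) R -> List.In (Neg phi, b') R -> b' = ~~ b)
  /\ (forall phi b, List.In (phi, b) R -> mod_axiom p phi -> b = true)
  /\ (forall phi b, List.In (phi, b) R -> negPHP n phi -> b = true).

(* Liar's answer is legal: right shape, rule (L2), and consistency *)
Definition legal_a (p n : nat) (R : list (form * bool)) (q : question) (a : answer) : Prop :=
  match q, a with
  | AskVal _, ABool _ => True
  | AskComp _ _, ABool b => b = false
  | AskWit phi, AIdx j => exists fs, phi = Or fs /\ j < size fs
  | _, _ => False
  end
  /\ consistent p n (R ++ stated (q, a)).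

Inductive valid (p d n t : nat) : history -> Prop :=
| valid_nil : valid p d n t [::]
| valid_snoc h q a : valid p d n t h -> legal_q p d n t (record h) q ->
    legal_a p n (record h) q a -> valid p d n t (h ++ [:: (q, a)]).

Fixpoint play (sigma : history -> question) (lambda : history -> question -> answer)
    (k : nat) : history :=
  match k with
  | 0 => [::]
  | k'.+1 => let h := play sigma lambda k' in h ++ [:: (sigma h, lambda h (sigma h))]
  end.

Definition prover_wins (p d n t : nat) : Prop :=
  exists sigma : history -> question,
    forall lambda : history -> question -> answer,
      (forall k, k < t -> valid p d n t (play sigma lambda k) ->
         legal_q p d n t (record (play sigma lambda k)) (sigma (play sigma lambda k)))
      /\ ~ valid p d n t (play sigma lambda t).

From mathcomp Require Import ssreflect ssrfun ssrbool eqtype ssrnat seq div prime.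
From mathcomp Require Import zify.
From Stdlib Require Import ClassicalEpsilon.
From Stdlib Require List.
Import List (In).

Set Implicit Arguments.
Unset Strict Implicit.
Unset Printing Implicit Defensive.

(* Prover runs a binary search along the refutation S_0, ..., S_k.  Let [S] be
   the disjunction of the negated antecedent and the succedent of S, and C_m
   the formula "the first m sequents hold", i.e. the negation of the
   disjunction of the negations of [S_0], ..., [S_(m-1)].  Liar must call C_0
   true, and C_(k+1) false because [S_k] is the empty disjunction, so O(log k)
   questions about C_mid locate an m with C_m true and C_(m+1) false: [S_m] is
   false while every earlier sequent is true.  As S_m is initial or follows by
   one rule from earlier sequents, a constant number of further questions
   forces Liar to violate (L0)-(L4).  Every question is built from formulas of
   the refutation by at most five layers of negations and disjunctions, so it
   has depth at most d + 5 and size O(s).  Beforehand all variables outside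
   those of ~PHP_n are renamed to p_11, which keeps the refutation valid. *)

Lemma In_cat (T : Type) (x : T) s1 s2 : In x (s1 ++ s2) <-> In x s1 \/ In x s2.
Proof. elim: s1 => [|y s IH] /=; first by tauto. rewrite IH; tauto. Qed.

Lemma In_catl (T : Type) (x : T) s1 s2 : In x s1 -> In x (s1 ++ s2).
Proof. by move=> H; apply/In_cat; left. Qed.

Lemma In_last (T : Type) (x : T) s : In x (s ++ [:: x]).
Proof. by apply/In_cat; right; left. Qed.

Lemma In_map (T1 T2 : Type) (f : T1 -> T2) x s :
  In x (map f s) <-> exists y, In y s /\ x = f y.
Proof.
elim: s => [|y s IH] /=; first by split=> // [[y []]].
split.
- case=> [<-|H]; first by exists y; auto.
  by have [z [Hz ->]] := proj1 IH H; exists z; auto.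
- case=> z [[<-|Hz] E]; first by left.
  by right; apply: (proj2 IH); exists z.
Qed.

Lemma map_In (T1 T2 : Type) (f : T1 -> T2) x s : In x s -> In (f x) (map f s).
Proof. by move=> H; apply/In_map; exists x. Qed.

Lemma In_nth (T : Type) (x0 : T) s j : j < size s -> In (nth x0 s j) s.
Proof. elim: s j => [|y s IH] [|j] //= H; first by left. by right; apply: IH. Qed.

Lemma nth_In (T : Type) (x0 : T) s x : In x s -> exists j, j < size s /\ nth x0 s j = x.
Proof.
elim: s => [|y s IH] //= [<-|/IH [j [H1 H2]]]; first by exists 0.
by exists j.+1.
Qed.

Lemma In_take (T : Type) (x : T) m s : In x (take m s) -> In x s.
Proof. by move=> H; rewrite -(cat_take_drop m s); apply: In_catl. Qed.

Lemma In_mem (T : eqType) (x : T) s : In x s -> x \in s.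
Proof. elim: s => [|y s IH] //= [->|/IH H]; by rewrite in_cons ?eqxx ?H ?orbT. Qed.

Lemma eq_map_In (T1 T2 : Type) (f g : T1 -> T2) s :
  (forall x, In x s -> f x = g x) -> map f s = map g s.
Proof.
elim: s => [|x s IH] H //=; rewrite H; last by left.
by rewrite IH // => y Hy; apply: H; right.
Qed.

Lemma In_sumn (T : Type) (f : T -> nat) x s : In x s -> f x <= sumn (map f s).
Proof.
elim: s => [|y s IH] //= [->|/IH H]; first exact: leq_addr.
by rewrite (leq_trans H) ?leq_addl.
Qed.

Lemma leq_sumn_map (T : Type) (f g : T -> nat) s : (forall x, In x s -> f x <= g x) ->
  sumn (map f s) <= sumn (map g s).
Proof.
elim: s => [|y s IH] //= H; apply: leq_add; first by apply: H; left.
by apply: IH => x Hx; apply: H; right.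
Qed.

Lemma sumn_take (T : Type) (f : T -> nat) m s : sumn (map f (take m s)) <= sumn (map f s).
Proof. by rewrite -{2}(cat_take_drop m s) map_cat sumn_cat leq_addr. Qed.

(* The induction principle generated for [form] gives no hypothesis about the
   formulas under [Or] and [Mod]. *)
Definition form_nested_ind (Pr : form -> Prop)
  (HV : forall i j, Pr (Var i j)) (HN : forall g, Pr g -> Pr (Neg g))
  (HO : forall fs, (forall g, In g fs -> Pr g) -> Pr (Or fs))
  (HM : forall i fs, (forall g, In g fs -> Pr g) -> Pr (Mod i fs)) : forall f, Pr f :=
  fix F f := match f with
  | Var i j => HV i j
  | Neg g => HN g (F g)
  | Or fs => HO fs ((fix G (l : list form) : forall g, In g l -> Pr g :=
        match l with
        | nil => fun g (H : In g nil) => False_ind _ H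
        | h :: t => fun g H => match H with
                              | or_introl e => eq_ind h Pr (F h) g e
                              | or_intror H' => G t g H'
                              end
        end) fs)
  | Mod i fs => HM i fs ((fix G (l : list form) : forall g, In g l -> Pr g :=
        match l with
        | nil => fun g (H : In g nil) => False_ind _ H
        | h :: t => fun g H => match H with
                              | or_introl e => eq_ind h Pr (F h) g e
                              | or_intror H' => G t g H'
                              end
        end) fs)
  end.

Lemma wf_Or p fs : wf p (Or fs) <-> forall g, In g fs -> wf p g.
Proof.
elim: fs => [|g gs IH]; first by split.
change (wf p g /\ wf p (Or gs) <-> forall g0, In g0 (g :: gs) -> wf p g0).
rewrite IH; split.
- by case=> H1 H2 g0 [<-|H]; [exact: H1|exact: H2].
- by move=> H; split; [apply: H; left|move=> g0 Hg; apply: H; right].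
Qed.

Lemma wf_Mod p i fs : wf p (Mod i fs) <-> i < p /\ wf p (Or fs).
Proof. by []. Qed.

Lemma php_vars_Or n fs : php_vars n (Or fs) <-> forall g, In g fs -> php_vars n g.
Proof.
elim: fs => [|g gs IH]; first by split.
change (php_vars n g /\ php_vars n (Or gs) <->
        forall g0, In g0 (g :: gs) -> php_vars n g0).
rewrite IH; split.
- by case=> H1 H2 g0 [<-|H]; [exact: H1|exact: H2].
- by move=> H; split; [apply: H; left|move=> g0 Hg; apply: H; right].
Qed.

Lemma php_vars_Mod n i fs : php_vars n (Mod i fs) <-> php_vars n (Or fs).
Proof. by []. Qed.

Lemma depth_Or_cons g gs : depth (Or (g :: gs)) =
  maxn (if kind g == 2 then depth g else (depth g).+1) (depth (Or gs)).
Proof. by []. Qed.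

Lemma depth_Mod_cons i g gs : depth (Mod i (g :: gs)) =
  maxn (if kind g == i.+3 then depth g else (depth g).+1) (depth (Mod i gs)).
Proof. by []. Qed.

Lemma depth_Neg_le g : depth (Neg g) <= (depth g).+1.
Proof. by rewrite /=; case: ifP. Qed.

Lemma depth_Or_le k fs : (forall g, In g fs -> depth g <= k) -> depth (Or fs) <= k.+1.
Proof.
elim: fs => [|g gs IH] H //.
rewrite depth_Or_cons geq_max; apply/andP; split.
- by have := H g (or_introl erefl); case: ifP => _; lia.
- by apply: IH => g0 Hg; apply: H; right.
Qed.

Lemma fsize_gt0 f : 0 < fsize f.
Proof. by case: f. Qed.

Lemma size_le_sumn_fsize fs : size fs <= sumn (map fsize fs).
Proof. elim: fs => [|g fs IH] //=; have := fsize_gt0 g; lia. Qed.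

Lemma sumn_fsize_Neg fs : sumn (map fsize (map Neg fs)) = sumn (map fsize fs) + size fs.
Proof. elim: fs => [|g fs IH] //=; rewrite IH; lia. Qed.

(* Renaming to p_11 needs n >= 1 for p_11 to be a variable of ~PHP_n. *)
Fixpoint clamp_vars (n : nat) (f : form) : form :=
  match f with
  | Var i j => if (i < n.+1) && (j < n) then Var i j else Var 0 0
  | Neg g => Neg (clamp_vars n g)
  | Or fs => Or (map (clamp_vars n) fs)
  | Mod i fs => Mod i (map (clamp_vars n) fs)
  end.

Definition clamp_sequent n (S : sequent) : sequent :=
  (map (clamp_vars n) S.1, map (clamp_vars n) S.2).

Lemma kind_clamp_vars n f : kind (clamp_vars n f) = kind f.
Proof. by case: f => //= i j; case: ifP. Qed.

Lemma depth_clamp_vars n f : depth (clamp_vars n f) = depth f.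
Proof.
elim/form_nested_ind: f => [i j|g IH|fs IH|i fs IH].
- by rewrite /=; case: ifP.
- by rewrite /= kind_clamp_vars IH.
- elim: fs IH => [|g gs IHl] IH //.
  change (depth (Or (clamp_vars n g :: map (clamp_vars n) gs)) = depth (Or (g :: gs))).
  rewrite !depth_Or_cons kind_clamp_vars IH; last by left.
  by have /= -> := IHl (fun g H => IH g (or_intror H)).
- elim: fs IH => [|g gs IHl] IH //.
  change (depth (Mod i (clamp_vars n g :: map (clamp_vars n) gs)) =
          depth (Mod i (g :: gs))).
  rewrite !depth_Mod_cons kind_clamp_vars IH; last by left.
  by have /= -> := IHl (fun g H => IH g (or_intror H)).
Qed.

Lemma fsize_clamp_vars n f : fsize (clamp_vars n f) = fsize f.
Proof.
elim/form_nested_ind: f => [i j|g IH|fs IH|i fs IH] /=.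
- by case: ifP.
- by rewrite IH.
- by rewrite -map_comp (eq_map_In (g := fsize) IH).
- by rewrite -map_comp (eq_map_In (g := fsize) IH).
Qed.

Lemma wf_clamp_vars p n f : wf p f -> wf p (clamp_vars n f).
Proof.
elim/form_nested_ind: f => [i j|g IH|fs IH|i fs IH].
- by rewrite /=; case: ifP.
- exact: IH.
- move/wf_Or => H; apply/wf_Or => _ /In_map [g [Hg ->]]; exact: IH (H g Hg).
- case/wf_Mod => Hi /wf_Or H; apply/wf_Mod; split => //.
  apply/wf_Or => _ /In_map [g [Hg ->]]; exact: IH (H g Hg).
Qed.

Lemma php_vars_clamp_vars n f : 0 < n -> php_vars n (clamp_vars n f).
Proof.
move=> Hn; elim/form_nested_ind: f => [i j|g IH|fs IH|i fs IH].
- by rewrite /=; case: ifP => [/andP []|].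
- exact: IH.
- by apply/php_vars_Or => _ /In_map [g [Hg ->]]; apply: IH.
- by apply/php_vars_Mod/php_vars_Or => _ /In_map [g [Hg ->]]; apply: IH.
Qed.

Lemma clamp_vars_negPHP n psi : negPHP n psi -> clamp_vars n psi = psi.
Proof.
case=> [[i [Hi ->]]|[[i1 [i2 [j [H1 [H2 [_ [Hj ->]]]]]]]|[i [j1 [j2 [Hi [H1 [H2 [_ ->]]]]]]]]].
- rewrite /= -map_comp; congr Or; apply: eq_map_In => j /In_mem.
  by rewrite mem_iota add0n => Hj /=; rewrite Hi Hj.
- by rewrite /= H1 H2 Hj.
- by rewrite /= Hi H1 H2.
Qed.

Lemma mod_axiom_clamp_vars p n psi : mod_axiom p psi -> mod_axiom p (clamp_vars n psi).
Proof.
case=> [->|[[i [Hi ->]]|[i [G [phi [Hi ->]]]]]].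
- by left.
- by right; left; exists i.
- right; right; exists i, (map (clamp_vars n) G), (clamp_vars n phi); split => //.
  by rewrite /Equiv /And /= map_cat.
Qed.

Lemma rule_inst_clamp p n prev S : rule_inst p n prev S ->
  rule_inst p n (map (clamp_sequent n) prev) (clamp_sequent n S).
Proof.
have Hm G D : In (G, D) prev ->
    In (map (clamp_vars n) G, map (clamp_vars n) D) (map (clamp_sequent n) prev).
  exact: (map_In (clamp_sequent n)).
case=> [phi|psi Hpsi|psi Hpsi|phi G D Hin|phi G D Hin|phi G D Hin|phi G D Hin
  |G1 G2 phi psi D Hin|G D1 D2 phi psi Hin|phi G D Hin1 Hin2|phi G D Hin|phi G D Hin
  |fs G D Hall|fs phi G D Hfs Hin]; rewrite /clamp_sequent /= ?map_cat /=.
- exact: R_init.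
- by apply: R_hyp; rewrite clamp_vars_negPHP.
- by apply: R_modax; apply: mod_axiom_clamp_vars.
- exact: R_weakl (Hm _ _ Hin).
- exact: R_weakr (Hm _ _ Hin).
- by apply: R_contrl; have := Hm _ _ Hin.
- by apply: R_contrr; have := Hm _ _ Hin; rewrite map_cat.
- by apply: R_exchl; have := Hm _ _ Hin; rewrite map_cat.
- by apply: R_exchr; have := Hm _ _ Hin; rewrite map_cat.
- apply: (@R_cut p n _ (clamp_vars n phi)); last exact: Hm _ _ Hin2.
  by have := Hm _ _ Hin1; rewrite map_cat.
- by apply: R_negl; have := Hm _ _ Hin; rewrite map_cat.
- by apply: R_negr; have := Hm _ _ Hin.
- by apply: R_orl => _ /In_map [phi [Hphi ->]]; exact: Hm _ _ (Hall _ Hphi).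
- apply: (@R_orr p n _ _ (clamp_vars n phi)); first exact: map_In.
  by have := Hm _ _ Hin; rewrite map_cat.
Qed.

Lemma proof_size_clamp n P : proof_size (map (clamp_sequent n) P) = proof_size P.
Proof.
have Hsum fs : sumn (map fsize (map (clamp_vars n) fs)) = sumn (map fsize fs).
  by rewrite -map_comp (eq_map_In (g := fsize)) // => f _ /=; rewrite fsize_clamp_vars.
by rewrite /proof_size -map_comp; congr sumn; apply: eq_map => S; rewrite /seq_size /= !Hsum.
Qed.

Lemma is_refutation_clamp p n d P : is_refutation p n d P ->
  is_refutation p n d (map (clamp_sequent n) P).
Proof.
case=> [Hr [[P' EP] Hf]]; split; [|split].
- move=> k; rewrite size_map => Hk.
  by rewrite -map_take (nth_map ([::], [::])) //; exact: rule_inst_clamp (Hr k Hk).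
- by exists (map (clamp_sequent n) P'); rewrite EP map_cat.
- move=> S' x /In_map [S [HS ->]]; rewrite /clamp_sequent /= -map_cat.
  move=> /In_map [phi [Hphi ->]]; have [Hwf Hd] := Hf _ _ HS Hphi.
  by rewrite depth_clamp_vars; split => //; exact: wf_clamp_vars.
Qed.

Definition empty_sequent : sequent := ([::], [::]).

Definition sequent_disjuncts (S : sequent) : list form := map Neg S.1 ++ S.2.

Definition sequent_form (S : sequent) : form := Or (sequent_disjuncts S).

Definition prefix_fails (P : list sequent) m : form :=
  Or (map (fun S => Neg (sequent_form S)) (take m P)).

Definition prefix_holds (P : list sequent) m : form := Neg (prefix_fails P m).

Definition bounded_form p d n (x : form) : Prop := wf p x /\ php_vars n x /\ depth x <= d.

Lemma game_formI p d n T x : bounded_form p d n x -> fsize x <= 2 ^ T -> game_form p d n T x.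
Proof. by case=> H1 [H2 H3] H4. Qed.

Lemma bounded_form_le p d d' n x : d <= d' -> bounded_form p d n x -> bounded_form p d' n x.
Proof. by move=> Hd [H1 [H2 H3]]; do 2!split => //; apply: leq_trans Hd. Qed.

Lemma bounded_clamp_vars p d n x : 0 < n -> wf p x -> depth x <= d ->
  bounded_form p d n (clamp_vars n x).
Proof.
move=> Hn Hwf Hd; split; first exact: wf_clamp_vars.
by split; [exact: php_vars_clamp_vars | rewrite depth_clamp_vars].
Qed.

Lemma bounded_Neg p d n x : bounded_form p d n x -> bounded_form p d.+1 n (Neg x).
Proof. by case=> H1 [H2 H3]; do 2!split => //; apply: leq_trans (depth_Neg_le x) _. Qed.

Lemma bounded_Or p d n fs : (forall x, In x fs -> bounded_form p d n x) ->
  bounded_form p d.+1 n (Or fs).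
Proof.
move=> H; split; first by apply/wf_Or => x /H [].
split; first by apply/php_vars_Or => x /H [_ []].
by apply: depth_Or_le => x /H [_ []].
Qed.

Lemma bounded_sequent_form p d n S : (forall x, In x (S.1 ++ S.2) -> bounded_form p d n x) ->
  bounded_form p d.+2 n (sequent_form S).
Proof.
move=> HS; apply: bounded_Or => y /In_cat [/In_map [x [Hx ->]]|Hy].
- by apply: bounded_Neg; apply: HS; apply/In_cat; left.
- by apply: (bounded_form_le (leqnSn d)); apply: HS; apply/In_cat; right.
Qed.

Lemma bounded_prefix_fails p d n P m :
  (forall S x, In S P -> In x (S.1 ++ S.2) -> bounded_form p d n x) ->
  bounded_form p d.+4 n (prefix_fails P m).
Proof.
move=> HP; apply: bounded_Or => y /In_map [S [HS ->]].
by apply/bounded_Neg/bounded_sequent_form => x; apply: HP (In_take HS).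
Qed.

Lemma fsize_le_seq_size S x : In x (S.1 ++ S.2) -> fsize x <= seq_size S.
Proof. by rewrite /seq_size => /In_cat [] /(In_sumn fsize); lia. Qed.

Lemma fsize_sequent_form S : fsize (sequent_form S) <= 2 * seq_size S.
Proof.
rewrite /sequent_form /sequent_disjuncts /= map_cat sumn_cat sumn_fsize_Neg /seq_size.
by have := size_le_sumn_fsize S.1; lia.
Qed.

Lemma fsize_prefix_fails P m : fsize (prefix_fails P m) <= 3 * proof_size P + 1.
Proof.
rewrite /prefix_fails /= -map_comp addn1 ltnS.
have Hsum s : sumn (map (fun S => 3 * seq_size S) s) = 3 * sumn (map seq_size s).
  by elim: s => [|S s IH] //=; rewrite IH; lia.
apply: leq_trans (_ : sumn (map (fun S => 3 * seq_size S) (take m P)) <= _).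
  apply: leq_sumn_map => S _; change ((fsize (sequent_form S)).+1 <= 3 * seq_size S).
  by have := fsize_sequent_form S; have : 0 < seq_size S by []; lia.
by rewrite Hsum leq_mul2l sumn_take.
Qed.

Section Game.

Variables p d n T : nat.

(* [wins R t]: once Liar has stated the values [R], Prover can force a rule
   violation within [t] more questions of size at most 2^T. *)
Inductive wins : list (form * bool) -> nat -> Prop :=
| wins_step R q t : legal_q p d n T R q ->
    (forall a, legal_a p n R q a -> wins (R ++ stated (q, a)) t) -> wins R t.+1.

Lemma winsS R t : wins R t -> wins R t.+1.
Proof. by elim=> R0 q t0 Hq _ IH; apply: (wins_step Hq) => a /IH. Qed.

Lemma wins_le R t t' : t <= t' -> wins R t -> wins R t'.
Proof.
move=> /subnK <-; elim: (t' - t) => [|k IH] //= H.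
by rewrite addSn; apply/winsS/IH.
Qed.

Lemma record_rcons h x : record (h ++ [:: x]) = record h ++ stated x.
Proof. by rewrite /record map_cat flatten_cat /= cats0. Qed.

Lemma valid_rcons_inv h q a : valid p d n T (h ++ [:: (q, a)]) ->
  valid p d n T h /\ legal_a p n (record h) q a.
Proof.
move=> H; inversion H as [H0|h' q' a' Hv Hq Ha E].
- by move: (f_equal size H0); rewrite size_cat addn1.
- by move: E; rewrite !cats1 => /rcons_inj [] <- <- <-.
Qed.

Lemma size_play sigma lambda k : size (play sigma lambda k) = k.
Proof. by elim: k => //= k IH; rewrite size_cat IH addn1. Qed.

Definition good_move (h : history) (q : question) : Prop :=
  legal_q p d n T (record h) q /\
  forall a, legal_a p n (record h) q a ->
    wins (record h ++ stated (q, a)) (T - size h).-1.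

Definition winning_move (h : history) : question :=
  epsilon (inhabits (AskVal (Var 0 0))) (good_move h).

Lemma winning_moveP h : wins (record h) (T - size h) -> good_move h (winning_move h).
Proof.
move=> H; apply: epsilon_spec; inversion H as [R q t Hq Hk E1 E2].
by exists q; split => // a Ha; rewrite -E2; apply: Hk.
Qed.

Lemma wins_along_play lambda k : wins [::] T -> k <= T ->
  valid p d n T (play winning_move lambda k) ->
  wins (record (play winning_move lambda k)) (T - k).
Proof.
move=> HT; elim: k => [|k IH] Hk; first by rewrite subn0.
move=> /= /valid_rcons_inv [Hv Ha].
have Hw : wins (record (play winning_move lambda k))
               (T - size (play winning_move lambda k)).
  by rewrite size_play; exact: IH (ltnW Hk) Hv.
have [_ Hnext] := winning_moveP Hw.
move: (Hnext _ Ha); rewrite size_play record_rcons.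
by have -> : T - k.+1 = (T - k).-1 by lia.
Qed.

Lemma prover_wins_of_wins : wins [::] T -> prover_wins p d n T.
Proof.
move=> HT; exists winning_move => lambda; split.
- move=> k Hk Hv.
  have Hw : wins (record (play winning_move lambda k))
                 (T - size (play winning_move lambda k)).
    by rewrite size_play; exact: wins_along_play (ltnW Hk) Hv.
  by case: (winning_moveP Hw).
- move=> Hv; move: (wins_along_play HT (leqnn T) Hv); rewrite subnn => H.
  by inversion H.
Qed.

Lemma wins_ask_val R phi t : game_form p d n T phi ->
  (forall b, consistent p n (R ++ [:: (phi, b)]) -> wins (R ++ [:: (phi, b)]) t) ->
  wins R t.+1.
Proof.
move=> Hphi Hk; apply: (wins_step (q := AskVal phi)) => //.
by case=> [b|j] [//= _ Hc]; apply: Hk.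
Qed.

Lemma wins_ask_comp R fs phi t : In (Or fs, false) R -> In phi fs ->
  (consistent p n (R ++ [:: (phi, false)]) -> wins (R ++ [:: (phi, false)]) t) ->
  wins R t.+1.
Proof.
move=> HR Hphi; have [j [Hj <-]] := nth_In (Var 0 0) Hphi => Hk.
apply: (wins_step (q := AskComp (Or fs) j)); first by split => //; exists fs.
by case=> [b|i] [//= -> Hc]; apply: Hk.
Qed.

Lemma wins_ask_wit R fs t : In (Or fs, true) R ->
  (forall phi, In phi fs ->
     consistent p n (R ++ [:: (phi, true)]) -> wins (R ++ [:: (phi, true)]) t) ->
  wins R t.+1.
Proof.
move=> HR Hk; apply: (wins_step (q := AskWit (Or fs))); first by split => //; exists fs.
by case=> [b|j] [] //= [fs' [[= <-] Hj]]; apply/Hk/In_nth.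
Qed.

Lemma consistent_functional R x b b' :
  consistent p n R -> In (x, b) R -> In (x, b') R -> b = b'.
Proof. by case=> H _; apply: H. Qed.

Lemma consistent_neg R x b b' :
  consistent p n R -> In (x, b) R -> In (Neg x, b') R -> b' = ~~ b.
Proof. by case=> _ [H _]; apply: H. Qed.

Lemma consistent_mod_axiom R x b : consistent p n R -> In (x, b) R -> mod_axiom p x -> b.
Proof. by case=> _ [_ [H _]] Hx /(H _ _ Hx) ->. Qed.

Lemma consistent_negPHP R x b : consistent p n R -> In (x, b) R -> negPHP n x -> b.
Proof. by case=> _ [_ [_ H]] Hx /(H _ _ Hx) ->. Qed.

Lemma consistent_rcons_neg R phi b c :
  consistent p n (R ++ [:: (phi, b)]) -> In (Neg phi, c) R -> b = ~~ c.
Proof.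
move=> Hc HR; rewrite (consistent_neg Hc (In_last _ _) (In_catl _ HR)).
by rewrite negbK.
Qed.

Definition refuted (R : list (form * bool)) (x : form) : Prop :=
  In (x, false) R \/ (exists y, x = Neg y /\ In (y, true) R) \/ In (Neg x, true) R.

Lemma refuted_inconsistent R R' x : List.incl R R' -> refuted R x ->
  ~ consistent p n (R' ++ [:: (x, true)]).
Proof.
move=> HRR' [H|[[y [-> H]]|H]] Hc.
- by have := consistent_functional Hc (In_catl _ (HRR' _ H)) (In_last _ _).
- by have := consistent_neg Hc (In_catl _ (HRR' _ H)) (In_last _ _).
- by have := consistent_rcons_neg Hc (HRR' _ H).
Qed.

(* Prover asks for a true disjunct of [Or F1], then for its value as a
   disjunct of [Or F2]. *)
Lemma wins_transfer R F1 F2 : In (Or F1, true) R -> In (Or F2, false) R ->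
  (forall x, In x F1 -> In x F2 \/ ~ consistent p n (R ++ [:: (x, true)])) ->
  wins R 2.
Proof.
move=> H1 H2 HF; apply: (wins_ask_wit H1) => x /HF [Hx|] // Hc.
apply: (wins_ask_comp (In_catl _ H2) Hx) => Hc'.
by have := consistent_functional Hc' (In_catl _ (In_last _ _)) (In_last _ _).
Qed.

Record askable_derivation (P : list sequent) : Prop := {
  askable_rule : forall m, m < size P -> rule_inst p n (take m P) (nth empty_sequent P m);
  askable_formula : forall S x, In S P -> In x (S.1 ++ S.2) -> game_form p d n T x;
  askable_sequent : forall S, In S P -> game_form p d n T (sequent_form S);
  askable_prefix_fails : forall m, m <= size P -> game_form p d n T (prefix_fails P m);
  askable_prefix_holds : forall m, m <= size P -> game_form p d n T (prefix_holds P m) }.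


Section Bisection.

Variable P : list sequent.
Hypothesis HP : askable_derivation P.

Lemma wins_premise_true R m S t : consistent p n R -> m <= size P ->
  In (prefix_holds P m, true) R -> In S (take m P) ->
  (forall R', List.incl R R' -> consistent p n R' -> In (sequent_form S, true) R' ->
     wins R' t) ->
  wins R t.+3.
Proof.
move=> Hc Hm HC HS Hk.
apply: (wins_ask_val (askable_prefix_fails HP Hm)) => b Hc1.
have /= Eb := consistent_rcons_neg Hc1 HC; subst b.
apply: (wins_ask_comp (In_last _ _) (map_In (fun S => Neg (sequent_form S)) HS)) => Hc2.
apply: (wins_ask_val (askable_sequent HP (In_take HS))) => b Hc3.
have /= Eb := consistent_rcons_neg Hc3 (In_last _ _); subst b.
apply: Hk => //; last exact: In_last.
by move=> x Hx; do 3 apply: In_catl.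
Qed.

Lemma wins_by_premise R m S S' : consistent p n R -> m <= size P ->
  In (prefix_holds P m, true) R -> In (sequent_form S, false) R -> In S' (take m P) ->
  (forall x, In x (sequent_disjuncts S') -> In x (sequent_disjuncts S) \/ refuted R x) ->
  wins R 5.
Proof.
move=> Hc Hm HC HS HS' Hsub.
apply: (wins_premise_true Hc Hm HC HS') => R' HRR' _ HS'true.
apply: (wins_transfer HS'true (HRR' _ HS)) => x /Hsub [|Hx]; first by left.
by right; apply: refuted_inconsistent HRR' Hx.
Qed.

Section FalseSequent.

Variables (R : list (form * bool)) (m : nat).
Hypotheses (Hm : m <= size P) (HC : In (prefix_holds P m, true) R).

Lemma wins_by_weaker_premise S S' : consistent p n R ->
  In (sequent_form S, false) R -> In S' (take m P) ->
  (forall x, In x (sequent_disjuncts S') -> In x (sequent_disjuncts S)) -> wins R 5.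
Proof. by move=> Hc HS HS' Hsub; apply: (wins_by_premise Hc Hm HC HS HS') => x /Hsub; left. Qed.

Lemma wins_false_cut phi G D : In (sequent_form (G, D), false) R ->
  In (G, D ++ [:: phi]) (take m P) -> In (phi :: G, D) (take m P) ->
  game_form p d n T phi -> wins R 6.
Proof.
move=> HS Hprem1 Hprem2 Hphi; apply: (wins_ask_val Hphi); case=> Hc1.
- apply: (wins_by_premise Hc1 Hm (In_catl _ HC) (In_catl _ HS) Hprem2).
  move=> x; rewrite /sequent_disjuncts /= => -[<-|Hx]; last by left.
  by right; right; left; exists phi; split => //; exact: In_last.
- apply: (wins_by_premise Hc1 Hm (In_catl _ HC) (In_catl _ HS) Hprem1).
  move=> x; rewrite /sequent_disjuncts /= In_cat In_cat /= => -[Hx|[Hx|[<-|[]]]].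
  + by left; apply/In_cat; left.
  + by left; apply/In_cat; right.
  + by right; left; exact: In_last.
Qed.

Lemma wins_false_negl phi G D : In (sequent_form (Neg phi :: G, D), false) R ->
  In (G, D ++ [:: phi]) (take m P) -> game_form p d n T (Neg phi) -> wins R 7.
Proof.
move=> HS Hprem Hphi.
apply: (wins_ask_comp (phi := Neg (Neg phi)) HS); first by left.
move=> Hc1; apply: (wins_ask_val Hphi) => b Hc2.
have /= Eb := consistent_rcons_neg Hc2 (In_last _ _); subst b.
apply: (wins_by_premise Hc2 Hm (In_catl _ (In_catl _ HC)) (In_catl _ (In_catl _ HS)) Hprem).
move=> x; rewrite /sequent_disjuncts /= In_cat In_cat /= => -[Hx|[Hx|[<-|[]]]].
- by left; right; apply/In_cat; left.
- by left; right; apply/In_cat; right.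
- by right; right; right; exact: In_last.
Qed.

Lemma wins_false_orl fs G D : In (sequent_form (Or fs :: G, D), false) R ->
  (forall phi, In phi fs -> In (phi :: G, D) (take m P)) ->
  game_form p d n T (Or fs) -> wins R 8.
Proof.
move=> HS Hprem Hphi.
apply: (wins_ask_comp (phi := Neg (Or fs)) HS); first by left.
move=> Hc1; apply: (wins_ask_val Hphi) => b Hc2.
have /= Eb := consistent_rcons_neg Hc2 (In_last _ _); subst b.
apply: (wins_ask_wit (In_last _ _)) => phi Hphi_fs Hc3.
apply: (wins_by_premise Hc3 Hm (In_catl _ (In_catl _ (In_catl _ HC)))
  (In_catl _ (In_catl _ (In_catl _ HS))) (Hprem _ Hphi_fs)).
move=> x; rewrite /sequent_disjuncts /= => -[<-|Hx]; last by left; right.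
by right; right; left; exists phi; split => //; exact: In_last.
Qed.

Lemma wins_false_orr fs phi G D : In (sequent_form (G, D ++ [:: Or fs]), false) R ->
  In phi fs -> In (G, D ++ [:: phi]) (take m P) -> wins R 7.
Proof.
move=> HS Hphi Hprem.
apply: (wins_ask_comp (phi := Or fs) HS).
  by apply/In_cat; right; exact: In_last.
move=> Hc1; apply: (wins_ask_comp (In_last _ _) Hphi) => Hc2.
apply: (wins_by_premise Hc2 Hm (In_catl _ (In_catl _ HC)) (In_catl _ (In_catl _ HS)) Hprem).
move=> x; rewrite /sequent_disjuncts /= In_cat In_cat /= => -[Hx|[Hx|[<-|[]]]].
- by left; apply/In_cat; left.
- by left; apply/In_cat; right; apply/In_cat; left.
- by right; left; exact: In_last.
Qed.

End FalseSequent.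

Ltac sub_disjuncts :=
  move=> x; rewrite /sequent_disjuncts /= ?map_cat ?In_cat /= ?In_cat /=; tauto.

Lemma wins_at_false_sequent R m : consistent p n R -> m < size P ->
  In (prefix_holds P m, true) R -> In (sequent_form (nth empty_sequent P m), false) R ->
  wins R 8.
Proof.
move=> Hc Hm HC; have Hm' := ltnW Hm.
move: (In_nth empty_sequent Hm) (askable_rule HP Hm); move: (nth _ P m) => S HinS Hrule.
case: Hrule HinS => [phi|psi Hpsi|psi Hpsi|phi G D Hin|phi G D Hin|phi G D Hin|phi G D Hin
  |G1 G2 phi psi D Hin|G D1 D2 phi psi Hin|phi G D Hin1 Hin2|phi G D Hin|phi G D Hin
  |fs G D Hall|fs phi G D Hfs Hin] HinS HS.
4-9, 12: by apply: (wins_le (t := 5)) => //;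
  apply: (wins_by_weaker_premise Hm' HC Hc HS Hin); sub_disjuncts.
- apply: (wins_le (t := 2)) => //.
  apply: (wins_ask_comp (phi := Neg phi) HS); first by left.
  move=> Hc1; apply: (wins_ask_comp (phi := phi) (In_catl _ HS)); first by right; left.
  by move=> /consistent_rcons_neg /(_ (In_last _ _)).
- apply: (wins_le (t := 1)) => //.
  apply: (wins_ask_comp (phi := psi) HS); first by left.
  by move=> /consistent_negPHP /(_ (In_last _ _) Hpsi).
- apply: (wins_le (t := 1)) => //.
  apply: (wins_ask_comp (phi := psi) HS); first by left.
  by move=> /consistent_mod_axiom /(_ (In_last _ _) Hpsi).
- apply: (wins_le (t := 6)) => //; apply: (wins_false_cut Hm' HC HS Hin1 Hin2).
  by apply: (askable_formula HP (In_take Hin1)); apply/In_cat; right; exact: In_last.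
- apply: (wins_le (t := 7)) => //; apply: (wins_false_negl Hm' HC HS Hin).
  by apply: (askable_formula HP HinS) => /=; left.
- apply: (wins_false_orl Hm' HC HS Hall).
  by apply: (askable_formula HP HinS) => /=; left.
- by apply: (wins_le (t := 7)) => //; apply: (wins_false_orr Hm' HC HS Hfs Hin).
Qed.

Lemma wins_at_boundary R m : consistent p n R -> m < size P ->
  In (prefix_holds P m, true) R -> In (prefix_holds P m.+1, false) R -> wins R 11.
Proof.
move=> Hc Hm HC HC1.
apply: (wins_ask_val (askable_prefix_fails HP Hm)) => b Hc1.
have /= Eb := consistent_rcons_neg Hc1 HC1; subst b.
apply: (wins_ask_wit (In_last _ _)) => _ /In_map [S [HS ->]] Hc2.
apply: (wins_ask_val (askable_sequent HP (In_take HS))) => b Hc3.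
have /= Eb := consistent_rcons_neg Hc3 (In_last _ _); subst b.
have [HSm|ES] : In S (take m P) \/ S = nth empty_sequent P m.
  by move: HS; rewrite (take_nth empty_sequent Hm) -cats1 => /In_cat [|[<-|[]]]; [left|right].
- apply: (wins_le (t := 2)) => //.
  apply: (wins_ask_val (askable_prefix_fails HP (ltnW Hm))) => b Hc4.
  have /= Eb := consistent_rcons_neg Hc4 (In_catl _ (In_catl _ (In_catl _ HC))); subst b.
  apply: (wins_ask_comp (In_last _ _) (map_In (fun S => Neg (sequent_form S)) HSm)) => Hc5.
  by have := consistent_functional Hc5 (In_catl _ (In_catl _ (In_catl _ (In_last _ _))))
    (In_last _ _).
- subst S; apply: (wins_at_false_sequent Hc3 Hm _ (In_last _ _)).
  by do 3 apply: In_catl.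
Qed.

Lemma wins_by_bisection r lo hi R : consistent p n R -> lo < hi -> hi <= size P ->
  hi - lo <= 2 ^ r -> In (prefix_holds P lo, true) R -> In (prefix_holds P hi, false) R ->
  wins R (11 + r).
Proof.
elim: r lo hi R => [|r IH] lo hi R Hc Hlh Hh Hr Hlo Hhi.
  have E : hi = lo.+1 by rewrite expn0 in Hr; lia.
  by subst hi; rewrite addn0; exact: wins_at_boundary Hc Hh Hlo Hhi.
have [E|Hne] : hi = lo.+1 \/ lo.+1 < hi by lia.
  subst hi; apply: (wins_le (t := 11)); first lia.
  exact: wins_at_boundary Hc Hh Hlo Hhi.
set mid := lo + (hi - lo) %/ 2.
have Hmid : mid <= size P by rewrite /mid; lia.
rewrite expnS in Hr; rewrite addnS.
apply: (wins_ask_val (askable_prefix_holds HP Hmid)); case=> Hc1.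
- by apply: (IH mid hi) => //; rewrite /mid; [lia | lia | exact: In_last | exact: In_catl].
- by apply: (IH lo mid) => //; rewrite /mid; [lia | lia | exact: In_catl | exact: In_last].
Qed.

Lemma wins_of_refutation r : 0 < size P -> In empty_sequent P -> size P <= 2 ^ r ->
  wins [::] (13 + r).
Proof.
move=> HP0 Hempty Hr; rewrite (_ : 13 + r = (12 + r).+1) //.
apply: (wins_ask_val (askable_prefix_holds HP (leq0n _))); case=> Hc1; last first.
  apply: (wins_le (t := 2)); first lia.
  apply: (wins_ask_val (askable_prefix_fails HP (leq0n _))) => b Hc2.
  have Eb : b = true := consistent_rcons_neg Hc2 (In_last _ _); subst b.
  by apply: (wins_ask_wit (In_last _ _)) => phi; rewrite take0.
rewrite (_ : 12 + r = (11 + r).+1) //.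
apply: (wins_ask_val (askable_prefix_holds HP (leqnn _))); case=> Hc2.
  apply: (wins_le (t := 4)); first lia.
  apply: (wins_premise_true (S := empty_sequent) Hc2 (leqnn _) (In_last _ _)).
    by rewrite take_size.
  by move=> R' _ _ Hempty_true; apply: (wins_ask_wit Hempty_true).
apply: (wins_by_bisection Hc2 HP0 (leqnn _)).
- by rewrite subn0.
- exact: In_catl (In_last _ _).
- exact: In_last.
Qed.

End Bisection.

End Game.

Lemma prover_wins_of_askable p d n T P r : askable_derivation p d n T P ->
  In empty_sequent P -> 0 < size P -> size P <= 2 ^ r -> 13 + r <= T ->
  prover_wins p d n T.
Proof.
move=> HP Hempty HP0 Hr HrT; apply: prover_wins_of_wins.
exact: wins_le HrT (wins_of_refutation HP HP0 Hempty Hr).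
Qed.

Lemma askable_of_refutation p d n T P :
  (forall m, m < size P -> rule_inst p n (take m P) (nth empty_sequent P m)) ->
  (forall S x, In S P -> In x (S.1 ++ S.2) -> bounded_form p d n x) ->
  0 < proof_size P -> 5 * proof_size P <= 2 ^ T ->
  askable_derivation p (d + 5) n T P.
Proof.
move=> Hrules Hbounded Hs0 HT.
have Hsize S : In S P -> seq_size S <= proof_size P by exact: In_sumn.
split => //.
- move=> S x HS Hx; apply: game_formI.
    by apply: bounded_form_le (Hbounded _ _ HS Hx); rewrite leq_addr.
  by have := fsize_le_seq_size Hx; have := Hsize S HS; lia.
- move=> S HS; apply: game_formI.
    by apply: bounded_form_le (bounded_sequent_form (fun x => Hbounded S x HS)); lia.
  by have := fsize_sequent_form S; have := Hsize S HS; lia.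
- move=> m _; apply: game_formI.
    by apply: bounded_form_le (bounded_prefix_fails m Hbounded); lia.
  by have := fsize_prefix_fails P m; lia.
- move=> m _; apply: game_formI.
    by apply: bounded_form_le (bounded_Neg (bounded_prefix_fails m Hbounded)); lia.
  by have := fsize_prefix_fails P m; rewrite /prefix_holds /=; lia.
Qed.

Lemma bounded_clamp_refutation p n d P : 0 < n -> is_refutation p n d P ->
  forall S x, In S (map (clamp_sequent n) P) -> In x (S.1 ++ S.2) -> bounded_form p d n x.
Proof.
move=> Hn [_ [_ Hforms]] S' x' /In_map [S [HS ->]].
rewrite /clamp_sequent /= -map_cat => /In_map [x [Hx ->]].
by have [Hwf Hd] := Hforms S x HS Hx; exact: bounded_clamp_vars.
Qed.

Lemma rule_inst_nil_nonempty p n S : rule_inst p n [::] S -> S <> empty_sequent.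
Proof. by case=> // [phi G D [] | fs G D H | fs phi G D _ []]. Qed.

Lemma two_le_size_refutation p n d P : is_refutation p n d P -> 2 <= size P.
Proof.
case=> Hrules [[P' EP] _]; rewrite EP size_cat addn1 ltnS.
case: P' EP => [|S P'] EP //.
by have := Hrules 0; rewrite EP /= => /(_ erefl) /rule_inst_nil_nonempty.
Qed.

Lemma size_le_proof_size P : size P <= proof_size P.
Proof. elim: P => [|S P IH] //=; rewrite /proof_size /= -/(proof_size P) /seq_size; lia. Qed.

Theorem lemma2p1 : forall p : nat, prime p ->
  exists c c' : nat, 0 < c /\ 0 < c' /\
    forall d n s : nat, 2 <= d -> 1 <= n -> 1 <= s ->
      (exists P : list sequent, is_refutation p n d P /\ proof_size P = s) ->
      prover_wins p (d + c) n (c' * trunc_log 2 s).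
Proof.
move=> p _; exists 5, 15; do 2!split => //.
move=> d n _ _ Hn _ [P0 [Href0 <-]].
have Href := is_refutation_clamp Href0; set P := map (clamp_sequent n) P0 in Href.
rewrite -(proof_size_clamp n P0) -/P.
have HP2 := two_le_size_refutation Href; have HPs := size_le_proof_size P.
set k := trunc_log 2 (proof_size P).
have Hk : 1 <= k by apply: trunc_log_max; lia.
have Hsk : proof_size P < 2 ^ k.+1 by apply: trunc_log_ltn.
have HT : 5 * proof_size P <= 2 ^ (15 * k).
  apply: leq_trans (_ : 2 ^ (k.+1 + 3) <= _); last by apply: leq_pexp2l => //; lia.
  by rewrite expnD; lia.
case: Href => [Hrules [[P' EP] _]].
apply: (prover_wins_of_askable (r := k.+1)) => //; last lia.
- apply: askable_of_refutation HT => //; last lia.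
  exact: bounded_clamp_refutation Href0.
- by rewrite EP; exact: In_last.
- lia.
- lia.
Qed.
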